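(* Let $Q\in\mathbb{R}^{n\times n}$ be symmetric positive definite, $h\in\mathbb{R}^n$, $\delta>0$, and $F(x)=\tfrac12x^TQx-x^Th$. Let $x^0\in\mathbb{R}^n$ have all entries positive and define the sequence $(x^k)$ by \[ x^{k+1}_i=x^k_i\,\frac{2(Q^-x^k)_i+h_i^++\delta}{(|Q|x^k)_i+h_i^-+\delta},\quad i=1,\dots,n . \] Then every $x^k$ has all entries positive, $F(x^{k+1})\le F(x^k)$ for all $k$, with strict inequality whenever $x^{k+1}\neq x^k$; and the sequence $F(x^k)$ converges to the global minimum of $F$ over $\{x\in\mathbb{R}^n: x\ge 0\}$, which is attained at the stationary point of the iteration.
   Context: For a matrix $M$, $M^+=\max(M,0)$ and $M^-=\max(-M,0)$ entrywise, and $|M|=M^++M^-$; for a vector $h$, $h^+=\max(h,0)$, $h^-=\max(-h,0)$ entrywise. The problem considered is the nonnegative quadratic program $\min F(x)$ subject to $x\ge 0$ (entrywise). *)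

(* real analysis (limits) needs Stdlib Reals.
   Vectors in R^n are functions nat -> R (only indices i < n matter),
   matrices are functions nat -> nat -> R (only i, j < n matter). *)
From Stdlib Require Import Reals.
Open Scope R_scope.

Fixpoint rsum (n : nat) (f : nat -> R) : R :=
  match n with
  | O => 0
  | S m => rsum m f + f m
  end.

Definition matvec (n : nat) (M : nat -> nat -> R) (x : nat -> R) (i : nat) : R :=
  rsum n (fun j => M i j * x j).

Definition quadform (n : nat) (M : nat -> nat -> R) (x : nat -> R) : R :=
  rsum n (fun i => x i * matvec n M x i).

Definition symmetric (n : nat) (Q : nat -> nat -> R) : Prop :=
  forall i j, (i < n)%nat -> (j < n)%nat -> Q i j = Q j i.

Definition pos_def (n : nat) (Q : nat -> nat -> R) : Prop :=
  forall x : nat -> R, (exists i, (i < n)%nat /\ x i <> 0) -> 0 < quadform n Q x.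

Definition Fobj (n : nat) (Q : nat -> nat -> R) (h : nat -> R) (x : nat -> R) : R :=
  / 2 * quadform n Q x - rsum n (fun i => x i * h i).

Definition pospart (a : R) : R := Rmax a 0.
Definition negpart (a : R) : R := Rmax (- a) 0.
Definition Mpos (Q : nat -> nat -> R) : nat -> nat -> R := fun i j => pospart (Q i j).
Definition Mneg (Q : nat -> nat -> R) : nat -> nat -> R := fun i j => negpart (Q i j).
Definition Mabs (Q : nat -> nat -> R) : nat -> nat -> R := fun i j => Mpos Q i j + Mneg Q i j.

Definition step (n : nat) (Q : nat -> nat -> R) (h : nat -> R) (delta : R)
  (x : nat -> R) : nat -> R :=
  fun i => x i * ((2 * matvec n (Mneg Q) x i + pospart (h i) + delta)
                  / (matvec n (Mabs Q) x i + negpart (h i) + delta)).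

Fixpoint iterate (n : nat) (Q : nat -> nat -> R) (h : nat -> R) (delta : R)
  (x0 : nat -> R) (k : nat) : nat -> R :=
  match k with
  | O => x0
  | S k' => step n Q h delta (iterate n Q h delta x0 k')
  end.

(* Write g = Qx - h for the gradient of F and D_i(x) = (|Q|x)_i + h_i^- + delta.  Because
   |Q| - Q = 2 Q^-, the update is the scaled gradient step x'_i = x_i - x_i g_i(x) / D_i(x).
   By AM-GM, d^T Q d <= sum_i (|Q|x)_i d_i^2 / x_i for x > 0, and expanding F(x + d) gives the
   descent inequality F(x') <= F(x) - 1/2 sum_i D_i(x) (x'_i - x_i)^2 / x_i.
   Positive definiteness makes F coercive, so the iterates are bounded, F(x^k) converges and the
   steps x^{k+1} - x^k tend to 0.  Hence every cluster point z satisfies z >= 0 and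
   z_i g_i(z) = 0.  Near z such complementary points are unique, so the iterates eventually stay
   close to z; if g_i(z) < 0 the i-th coordinate would then keep increasing while it must
   approach z_i = 0.  Thus g(z) >= 0: z satisfies the KKT conditions of the convex problem, is
   a global minimiser and a fixed point of the update, and F(x^k) converges to F(z). *)

From Stdlib Require Import Reals Lra Lia Psatz Classical ClassicalEpsilon FunctionalExtensionality.
Open Scope R_scope.

Lemma rsum_ext m f g : (forall i, (i < m)%nat -> f i = g i) -> rsum m f = rsum m g.
Proof.
  induction m as [|m IH]; intros H; simpl; [reflexivity|].
  rewrite IH by (intros; apply H; lia). rewrite H by lia. reflexivity.
Qed.

Lemma rsum_add m f g : rsum m (fun i => f i + g i) = rsum m f + rsum m g.
Proof. induction m; simpl; [lra | rewrite IHm; lra]. Qed.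

Lemma rsum_sub m f g : rsum m (fun i => f i - g i) = rsum m f - rsum m g.
Proof. induction m; simpl; [lra | rewrite IHm; lra]. Qed.

Lemma rsum_scal m c f : rsum m (fun i => c * f i) = c * rsum m f.
Proof. induction m; simpl; [lra | rewrite IHm; lra]. Qed.

Lemma rsum_eq0 m f : (forall i, (i < m)%nat -> f i = 0) -> rsum m f = 0.
Proof.
  intros H. transitivity (rsum m (fun _ => 0)); [now apply rsum_ext|].
  induction m; simpl; [lra | rewrite IHm; [lra | intros; apply H; lia]].
Qed.

Lemma rsum_le m f g : (forall i, (i < m)%nat -> f i <= g i) -> rsum m f <= rsum m g.
Proof.
  induction m as [|m IH]; intros H; simpl; [lra|].
  assert (f m <= g m) by (apply H; lia).
  assert (rsum m f <= rsum m g) by (apply IH; intros; apply H; lia).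
  lra.
Qed.

Lemma rsum_nonneg m f : (forall i, (i < m)%nat -> 0 <= f i) -> 0 <= rsum m f.
Proof. intros H. rewrite <- (rsum_eq0 m (fun _ => 0)) by auto. now apply rsum_le. Qed.

Lemma rsum_ge_term m f i :
  (forall j, (j < m)%nat -> 0 <= f j) -> (i < m)%nat -> f i <= rsum m f.
Proof.
  induction m as [|m IH]; intros H Hi; simpl; [lia|].
  assert (0 <= rsum m f) by (apply rsum_nonneg; intros; apply H; lia).
  destruct (Nat.eq_dec i m) as [->|Him]; [lra|].
  assert (f i <= rsum m f) by (apply IH; [intros; apply H|]; lia).
  assert (0 <= f m) by (apply H; lia).
  lra.
Qed.

Lemma rsum_pos m f :
  (forall i, (i < m)%nat -> 0 <= f i) -> (exists i, (i < m)%nat /\ 0 < f i) -> 0 < rsum m f.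
Proof. intros H [i [Hi Hfi]]. pose proof (rsum_ge_term m f i H Hi). lra. Qed.

Lemma rsum_swap m p (f : nat -> nat -> R) :
  rsum m (fun i => rsum p (f i)) = rsum p (fun j => rsum m (fun i => f i j)).
Proof.
  induction m; simpl.
  - symmetry; now apply rsum_eq0.
  - rewrite IHm, <- rsum_add; reflexivity.
Qed.

Lemma Mabs_abs Q i j : Mabs Q i j = Rabs (Q i j).
Proof.
  unfold Mabs, Mpos, Mneg, pospart, negpart, Rmax, Rabs.
  repeat destruct Rle_dec; destruct Rcase_abs; lra.
Qed.

Lemma pospart_sub_negpart a : pospart a - negpart a = a.
Proof. unfold pospart, negpart, Rmax; repeat destruct Rle_dec; lra. Qed.

Lemma pospart_ge0 a : 0 <= pospart a.
Proof. unfold pospart, Rmax; destruct Rle_dec; lra. Qed.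

Lemma negpart_ge0 a : 0 <= negpart a.
Proof. unfold negpart, Rmax; destruct Rle_dec; lra. Qed.

Lemma negpart_le_abs a : negpart a <= Rabs a.
Proof. unfold negpart, Rmax, Rabs; destruct Rle_dec; destruct Rcase_abs; lra. Qed.

Lemma matvec_add n M x y i :
  matvec n M (fun j => x j + y j) i = matvec n M x i + matvec n M y i.
Proof. unfold matvec. rewrite <- rsum_add. apply rsum_ext; intros; ring. Qed.

Lemma matvec_sub n M x y i :
  matvec n M (fun j => x j - y j) i = matvec n M x i - matvec n M y i.
Proof. unfold matvec. rewrite <- rsum_sub. apply rsum_ext; intros; ring. Qed.

Lemma matvec_ge0 n M x i :
  (forall j, (j < n)%nat -> 0 <= M i j) -> (forall j, (j < n)%nat -> 0 <= x j) ->
  0 <= matvec n M x i.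
Proof. intros HM Hx. apply rsum_nonneg; intros j Hj. now apply Rmult_le_pos; auto. Qed.

Lemma quadform_eq0 n Q x : (forall i, (i < n)%nat -> x i = 0) -> quadform n Q x = 0.
Proof. intros H. apply rsum_eq0; intros i Hi. rewrite H by exact Hi. ring. Qed.

Lemma pos_def_psd n Q : pos_def n Q -> forall x, 0 <= quadform n Q x.
Proof.
  intros HQ x. destruct (classic (exists i, (i < n)%nat /\ x i <> 0)) as [Hx|Hx].
  - now apply Rlt_le, HQ.
  - rewrite quadform_eq0; [lra|]. intros i Hi. apply NNPP. intros Hxi. apply Hx. now exists i.
Qed.

Lemma weighted_cross_term_le a xi xj di dj : 0 < xi -> 0 < xj ->
  a * di * dj <= / 2 * (Rabs a * xj * (di * di) / xi + Rabs a * xi * (dj * dj) / xj).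
Proof.
  intros Hi Hj.
  set (u := di / xi); set (v := dj / xj).
  replace di with (xi * u) by (unfold u; field; lra).
  replace dj with (xj * v) by (unfold v; field; lra).
  replace (/ 2 * (Rabs a * xj * (xi * u * (xi * u)) / xi + Rabs a * xi * (xj * v * (xj * v)) / xj))
    with (xi * xj * (/ 2 * Rabs a * (u * u + v * v))) by (field; lra).
  replace (a * (xi * u) * (xj * v)) with (xi * xj * (a * u * v)) by ring.
  apply Rmult_le_compat_l; [nra|].
  unfold Rabs; destruct Rcase_abs.
  - assert (0 <= (u + v) * (u + v)) by apply Rle_0_sqr. nra.
  - assert (0 <= (u - v) * (u - v)) by apply Rle_0_sqr. nra.
Qed.

Section Update.
Variables (n : nat) (Q : nat -> nat -> R) (h : nat -> R) (delta : R).
Hypothesis HQs : symmetric n Q.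
Hypothesis Hdelta : 0 < delta.

Definition grad (x : nat -> R) (i : nat) : R := matvec n Q x i - h i.
Definition denom (x : nat -> R) (i : nat) : R := matvec n (Mabs Q) x i + negpart (h i) + delta.

(* the decrease of F guaranteed by one update, coordinate by coordinate *)
Definition gain (x : nat -> R) (i : nat) : R :=
  / 2 * denom x i * ((step n Q h delta x i - x i) * (step n Q h delta x i - x i)) / x i.

Definition nonneg (x : nat -> R) : Prop := forall i, (i < n)%nat -> 0 <= x i.
Definition complementary (x : nat -> R) : Prop := forall i, (i < n)%nat -> x i * grad x i = 0.

Lemma matvec_Mabs_ge0 x i : nonneg x -> 0 <= matvec n (Mabs Q) x i.
Proof. apply matvec_ge0; intros j _. rewrite Mabs_abs. apply Rabs_pos. Qed.

Lemma denom_ge x i : nonneg x -> delta <= denom x i.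
Proof.
  intros Hx. unfold denom.
  pose proof (matvec_Mabs_ge0 x i Hx). pose proof (negpart_ge0 (h i)). lra.
Qed.

(* the numerator of the update is [denom x i - grad x i], since [|Q| - Q = 2 Q^-] *)
Lemma step_eq x i : nonneg x -> step n Q h delta x i = x i - x i * grad x i / denom x i.
Proof.
  intros Hx. pose proof (denom_ge x i Hx).
  assert (Hnum : 2 * matvec n (Mneg Q) x i + pospart (h i) + delta = denom x i - grad x i).
  { unfold denom, grad.
    assert (matvec n (Mabs Q) x i - matvec n Q x i = 2 * matvec n (Mneg Q) x i).
    { unfold matvec. rewrite <- rsum_sub, <- rsum_scal. apply rsum_ext; intros j _.
      unfold Mabs. rewrite <- (pospart_sub_negpart (Q i j)). unfold Mpos, Mneg. ring. }
    pose proof (pospart_sub_negpart (h i)). lra. }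
  unfold step. rewrite Hnum. fold (denom x i). field. lra.
Qed.

Lemma step_pos x i : (forall j, (j < n)%nat -> 0 < x j) -> (i < n)%nat -> 0 < step n Q h delta x i.
Proof.
  intros Hx Hi. assert (Hx0 : nonneg x) by (intros j Hj; now apply Rlt_le, Hx).
  assert (0 <= matvec n (Mneg Q) x i).
  { apply matvec_ge0; [intros; apply negpart_ge0 | exact Hx0]. }
  pose proof (matvec_Mabs_ge0 x i Hx0). pose proof (pospart_ge0 (h i)). pose proof (negpart_ge0 (h i)).
  apply Rmult_lt_0_compat; [now apply Hx | apply Rdiv_lt_0_compat; lra].
Qed.

Lemma step_fixed x i : nonneg x -> complementary x -> (i < n)%nat -> step n Q h delta x i = x i.
Proof. intros Hx Hc Hi. rewrite step_eq, Hc by assumption. unfold Rdiv; ring. Qed.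

Lemma bilinear_sym x y :
  rsum n (fun i => x i * matvec n Q y i) = rsum n (fun i => y i * matvec n Q x i).
Proof.
  unfold matvec.
  transitivity (rsum n (fun i => rsum n (fun j => x i * Q i j * y j))).
  { apply rsum_ext; intros. rewrite <- rsum_scal. apply rsum_ext; intros; ring. }
  rewrite rsum_swap. apply rsum_ext; intros j Hj. rewrite <- rsum_scal.
  apply rsum_ext; intros i Hi. rewrite (HQs i j) by assumption. ring.
Qed.

Lemma Fobj_add x d : Fobj n Q h (fun i => x i + d i) =
  Fobj n Q h x + rsum n (fun i => d i * grad x i) + / 2 * quadform n Q d.
Proof.
  unfold Fobj, quadform.
  assert (Hq : rsum n (fun i => (x i + d i) * matvec n Q (fun j => x j + d j) i) =
    rsum n (fun i => x i * matvec n Q x i) + 2 * rsum n (fun i => d i * matvec n Q x i)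
    + rsum n (fun i => d i * matvec n Q d i)).
  { transitivity (rsum n (fun i => x i * matvec n Q x i) + rsum n (fun i => x i * matvec n Q d i)
      + (rsum n (fun i => d i * matvec n Q x i) + rsum n (fun i => d i * matvec n Q d i))).
    - rewrite <- !rsum_add. apply rsum_ext; intros. rewrite matvec_add. ring.
    - rewrite (bilinear_sym x d). ring. }
  assert (Hl : rsum n (fun i => (x i + d i) * h i) =
    rsum n (fun i => x i * h i) + rsum n (fun i => d i * h i)).
  { rewrite <- rsum_add. apply rsum_ext; intros; ring. }
  assert (Hg : rsum n (fun i => d i * grad x i) =
    rsum n (fun i => d i * matvec n Q x i) - rsum n (fun i => d i * h i)).
  { rewrite <- rsum_sub. apply rsum_ext; intros. unfold grad; ring. }
  rewrite Hq, Hl, Hg. field.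
Qed.

(* the separable quadratic majorant of Lee and Seung, at a positive point [x] *)
Lemma quadform_le_majorant x d : (forall j, (j < n)%nat -> 0 < x j) ->
  quadform n Q d <= rsum n (fun i => matvec n (Mabs Q) x i * (d i * d i) / x i).
Proof.
  intros Hx.
  set (A := fun i j => Rabs (Q i j) * x j * (d i * d i) / x i).
  assert (Hl : quadform n Q d = rsum n (fun i => rsum n (fun j => Q i j * d i * d j))).
  { unfold quadform, matvec. apply rsum_ext; intros. rewrite <- rsum_scal. apply rsum_ext; intros. ring. }
  assert (Hr : rsum n (fun i => matvec n (Mabs Q) x i * (d i * d i) / x i) =
               rsum n (fun i => rsum n (fun j => / 2 * (A i j + A j i)))).
  { transitivity (rsum n (fun i => rsum n (A i))).
    - unfold matvec, A. apply rsum_ext; intros. unfold Rdiv.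
      rewrite Rmult_assoc, Rmult_comm, <- rsum_scal. apply rsum_ext; intros. rewrite Mabs_abs. ring.
    - transitivity (/ 2 * (rsum n (fun i => rsum n (A i)) + rsum n (fun i => rsum n (fun j => A j i)))).
      + rewrite (rsum_swap n n A). field.
      + rewrite <- rsum_add, <- rsum_scal. apply rsum_ext; intros.
        rewrite <- rsum_add, <- rsum_scal. reflexivity. }
  rewrite Hl, Hr. apply rsum_le; intros i Hi; apply rsum_le; intros j Hj.
  unfold A. rewrite (HQs j i) by assumption. now apply weighted_cross_term_le; auto.
Qed.

Lemma step_descent x : (forall j, (j < n)%nat -> 0 < x j) ->
  Fobj n Q h (step n Q h delta x) + rsum n (gain x) <= Fobj n Q h x.
Proof.
  intros Hx. assert (Hx0 : nonneg x) by (intros j Hj; now apply Rlt_le, Hx).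
  set (d := fun i => step n Q h delta x i - x i).
  replace (step n Q h delta x) with (fun i => x i + d i)
    by (apply functional_extensionality; intros; unfold d; ring).
  rewrite Fobj_add. pose proof (quadform_le_majorant x d Hx).
  (* with [grad x i = - denom x i * d i / x i] the coordinate terms are [((|Q|x)_i - D_i) d_i^2 / (2 x_i)] *)
  assert (Hterms : rsum n (fun i => d i * grad x i
                     + / 2 * (matvec n (Mabs Q) x i * (d i * d i) / x i) + gain x i) <= 0).
  { rewrite <- (rsum_eq0 n (fun _ => 0)) by auto. apply rsum_le; intros i Hi.
    pose proof (Hx i Hi). pose proof (denom_ge x i Hx0).
    assert (Hg : grad x i = - denom x i * d i / x i).
    { unfold d. rewrite step_eq by exact Hx0. field. lra. }
    assert (matvec n (Mabs Q) x i <= denom x i)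
      by (unfold denom; pose proof (negpart_ge0 (h i)); lra).
    assert (0 <= d i * d i / x i) by (apply Rmult_le_pos; [nra | apply Rlt_le, Rinv_0_lt_compat; lra]).
    unfold gain. fold (d i). rewrite Hg. unfold Rdiv in *. nra. }
  rewrite !rsum_add, rsum_scal in Hterms. lra.
Qed.

Lemma gain_ge0 x i : (forall j, (j < n)%nat -> 0 < x j) -> (i < n)%nat -> 0 <= gain x i.
Proof.
  intros Hx Hi. pose proof (denom_ge x i (fun j Hj => Rlt_le _ _ (Hx j Hj))). pose proof (Hx i Hi).
  unfold gain. apply Rmult_le_pos; [apply Rmult_le_pos; [lra | apply Rle_0_sqr]|].
  apply Rlt_le, Rinv_0_lt_compat; lra.
Qed.

Lemma gain_pos x i : (forall j, (j < n)%nat -> 0 < x j) -> (i < n)%nat ->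
  step n Q h delta x i <> x i -> 0 < gain x i.
Proof.
  intros Hx Hi Hne. pose proof (denom_ge x i (fun j Hj => Rlt_le _ _ (Hx j Hj))). pose proof (Hx i Hi).
  assert (0 < (step n Q h delta x i - x i) * (step n Q h delta x i - x i))
    by (apply Rsqr_pos_lt; lra).
  unfold gain. apply Rmult_lt_0_compat; [nra | apply Rinv_0_lt_compat; lra].
Qed.

Lemma gain_ge x i B : (forall j, (j < n)%nat -> 0 < x j) -> (i < n)%nat -> x i <= B ->
  delta / (2 * B) * ((step n Q h delta x i - x i) * (step n Q h delta x i - x i)) <= gain x i.
Proof.
  intros Hx Hi HB. pose proof (denom_ge x i (fun j Hj => Rlt_le _ _ (Hx j Hj))). pose proof (Hx i Hi).
  set (s := (step n Q h delta x i - x i) * (step n Q h delta x i - x i)).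
  assert (0 <= s) by apply Rle_0_sqr.
  assert (delta / B <= denom x i / x i).
  { unfold Rdiv. apply Rmult_le_compat; try lra; [apply Rlt_le, Rinv_0_lt_compat; lra|].
    apply Rinv_le_contravar; lra. }
  unfold gain. fold s. replace (delta / (2 * B) * s) with (/ 2 * (delta / B) * s) by (field; lra).
  replace (/ 2 * denom x i * s / x i) with (/ 2 * (denom x i / x i) * s) by (field; lra).
  nra.
Qed.

End Update.

Definition near (n : nat) (y z : nat -> R) (e : R) : Prop :=
  forall i, (i < n)%nat -> Rabs (y i - z i) < e.

Definition cont_at (n : nat) (f : (nat -> R) -> R) (z : nat -> R) : Prop :=
  forall e, 0 < e -> exists eta, 0 < eta /\ forall y, near n y z eta -> Rabs (f y - f z) < e.

Lemma near_weaken n y z e e' : e <= e' -> near n y z e -> near n y z e'.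
Proof. intros He H i Hi. specialize (H i Hi). lra. Qed.

Lemma near_triangle n x y z e e' : near n x y e -> near n y z e' -> near n x z (e + e').
Proof.
  intros Hxy Hyz i Hi. specialize (Hxy i Hi). specialize (Hyz i Hi).
  pose proof (Rabs_triang (x i - y i) (y i - z i)) as Htri.
  replace (x i - y i + (y i - z i)) with (x i - z i) in Htri by ring. lra.
Qed.

Lemma near_sym n y z e : near n y z e -> near n z y e.
Proof. intros H i Hi. rewrite <- Rabs_Ropp. replace (- (z i - y i)) with (y i - z i) by ring. auto. Qed.

Lemma cont_at_const n c z : cont_at n (fun _ => c) z.
Proof. intros e He. exists 1. split; [lra|]. intros. unfold Rminus. rewrite Rplus_opp_r, Rabs_R0. lra. Qed.

Lemma cont_at_coord n i z : (i < n)%nat -> cont_at n (fun y => y i) z.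
Proof. intros Hi e He. exists e. split; auto. Qed.

Lemma cont_at_add n f g z : cont_at n f z -> cont_at n g z -> cont_at n (fun y => f y + g y) z.
Proof.
  intros Hf Hg e He.
  destruct (Hf (e / 2)) as [a [Ha Hfa]]; [lra|]. destruct (Hg (e / 2)) as [b [Hb Hgb]]; [lra|].
  exists (Rmin a b). split; [now apply Rmin_glb_lt|]. intros y Hy.
  specialize (Hfa y (near_weaken _ _ _ _ _ (Rmin_l a b) Hy)).
  specialize (Hgb y (near_weaken _ _ _ _ _ (Rmin_r a b) Hy)).
  replace (f y + g y - (f z + g z)) with ((f y - f z) + (g y - g z)) by ring.
  pose proof (Rabs_triang (f y - f z) (g y - g z)). lra.
Qed.

Lemma cont_at_scal n c f z : cont_at n f z -> cont_at n (fun y => c * f y) z.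
Proof.
  intros Hf e He. destruct (Hf (e / (Rabs c + 1))) as [a [Ha Hfa]].
  { apply Rdiv_lt_0_compat; [lra|]. pose proof (Rabs_pos c). lra. }
  exists a. split; [exact Ha|]. intros y Hy. specialize (Hfa y Hy).
  rewrite <- Rmult_minus_distr_l, Rabs_mult. pose proof (Rabs_pos c).
  assert (0 < e / (Rabs c + 1)) by (apply Rdiv_lt_0_compat; lra).
  apply Rle_lt_trans with (Rabs c * (e / (Rabs c + 1))).
  - apply Rmult_le_compat_l; lra.
  - apply Rlt_le_trans with ((Rabs c + 1) * (e / (Rabs c + 1))); [lra|]. right. field. lra.
Qed.

Lemma cont_at_sub n f g z : cont_at n f z -> cont_at n g z -> cont_at n (fun y => f y - g y) z.
Proof.
  intros Hf Hg. apply (cont_at_add n f (fun y => - g y)); [exact Hf|].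
  intros e He. destruct (cont_at_scal n (-1) g z Hg e He) as [a [Ha Hga]].
  exists a. split; [exact Ha|]. intros y Hy. specialize (Hga y Hy).
  replace (- g y - - g z) with (-1 * g y - -1 * g z) by ring. exact Hga.
Qed.

(* [f y g y - f z g z = p q + f z q + g z p] with [p, q] the increments *)
Lemma cont_at_mul n f g z : cont_at n f z -> cont_at n g z -> cont_at n (fun y => f y * g y) z.
Proof.
  intros Hf Hg e He.
  set (M := Rabs (f z) + Rabs (g z) + 1).
  assert (HM : 1 <= M) by (unfold M; pose proof (Rabs_pos (f z)); pose proof (Rabs_pos (g z)); lra).
  set (c := Rmin 1 (e / M)).
  assert (Hc : 0 < c) by (apply Rmin_glb_lt; [lra | apply Rdiv_lt_0_compat; lra]).
  assert (HcM : c * M <= e).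
  { apply Rle_trans with (e / M * M); [apply Rmult_le_compat_r; [lra | apply Rmin_r]|].
    right. field. lra. }
  destruct (Hf c Hc) as [a [Ha Hfa]]. destruct (Hg c Hc) as [b [Hb Hgb]].
  exists (Rmin a b). split; [now apply Rmin_glb_lt|]. intros y Hy.
  specialize (Hfa y (near_weaken _ _ _ _ _ (Rmin_l a b) Hy)).
  specialize (Hgb y (near_weaken _ _ _ _ _ (Rmin_r a b) Hy)).
  set (p := f y - f z) in *. set (q := g y - g z) in *.
  replace (f y * g y - f z * g z) with (p * q + f z * q + g z * p) by (unfold p, q; ring).
  pose proof (Rabs_triang (p * q + f z * q) (g z * p)). pose proof (Rabs_triang (p * q) (f z * q)).
  rewrite !Rabs_mult in *. pose proof (Rmin_l 1 (e / M)) as Hc1. fold c in Hc1.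
  pose proof (Rabs_pos p). pose proof (Rabs_pos q). pose proof (Rabs_pos (f z)). pose proof (Rabs_pos (g z)).
  assert (Rabs p * Rabs q <= c * c) by (apply Rmult_le_compat; lra).
  assert (Rabs (f z) * Rabs q <= Rabs (f z) * c) by (apply Rmult_le_compat_l; lra).
  assert (Rabs (g z) * Rabs p <= Rabs (g z) * c) by (apply Rmult_le_compat_l; lra).
  unfold M in HcM. nra.
Qed.

Lemma cont_at_rsum n m (F : nat -> (nat -> R) -> R) z :
  (forall j, (j < m)%nat -> cont_at n (F j) z) -> cont_at n (fun y => rsum m (fun j => F j y)) z.
Proof.
  induction m as [|m IH]; intros H; simpl; [apply cont_at_const|].
  apply (cont_at_add n (fun y => rsum m (fun j => F j y)) (F m)); [apply IH; intros|]; apply H; lia.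
Qed.

Lemma cont_at_matvec n M z i : cont_at n (fun y => matvec n M y i) z.
Proof.
  apply (cont_at_rsum n n (fun j y => M i j * y j)); intros j Hj.
  now apply cont_at_scal, cont_at_coord.
Qed.

Lemma cont_at_quadform n M z : cont_at n (quadform n M) z.
Proof.
  apply (cont_at_rsum n n (fun i y => y i * matvec n M y i)); intros j Hj.
  apply (cont_at_mul n (fun y => y j)); [now apply cont_at_coord | apply cont_at_matvec].
Qed.

Lemma cont_at_Fobj n Q h z : cont_at n (Fobj n Q h) z.
Proof.
  apply (cont_at_sub n (fun y => / 2 * quadform n Q y)); [apply cont_at_scal, cont_at_quadform|].
  apply (cont_at_rsum n n (fun i y => y i * h i)); intros j Hj.
  apply (cont_at_mul n (fun y => y j) (fun _ => h j)); [now apply cont_at_coord | apply cont_at_const].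
Qed.

Lemma cont_at_grad n Q h z i : cont_at n (fun y => grad n Q h y i) z.
Proof. apply (cont_at_sub n (fun y => matvec n Q y i)); [apply cont_at_matvec | apply cont_at_const]. Qed.

Definition infinitely_often (P : nat -> Prop) : Prop := forall N, exists k, (N <= k)%nat /\ P k.

Definition cluster_along (n : nat) (u : nat -> nat -> R) (P : nat -> Prop) (z : nat -> R) : Prop :=
  forall e, 0 < e -> infinitely_often (fun k => P k /\ near n (u k) z e).

(* [w] is the supremum of the levels [t] that [v] exceeds infinitely often (up to any [e]) *)
Lemma bounded_cluster_value (P : R -> nat -> Prop) (v : nat -> R) B :
  (forall e e' k, 0 < e <= e' -> P e k -> P e' k) ->
  (forall e, 0 < e -> infinitely_often (P e)) ->
  (forall k, - B <= v k <= B) ->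
  exists w, forall e, 0 < e -> infinitely_often (fun k => P e k /\ Rabs (v k - w) < e).
Proof.
  intros Hmono Hinf HB.
  set (A := fun t => forall e, 0 < e -> infinitely_often (fun k => P e k /\ t - e < v k)).
  assert (HA : A (- B)).
  { intros e He N. destruct (Hinf e He N) as [k [Hk Pk]]. exists k.
    specialize (HB k). repeat split; auto. lra. }
  assert (Hbd : bound A).
  { exists (B + 1). intros t Ht. destruct (Ht 1 ltac:(lra) 0%nat) as [k [_ [_ Hk]]].
    specialize (HB k). lra. }
  destruct (completeness A Hbd (ex_intro _ _ HA)) as [w [Hub Hlub]].
  assert (HwA : A w).
  { intros e He N.
    assert (Ht : exists t, A t /\ w - e / 2 < t).
    { apply NNPP. intros Hn. assert (w <= w - e / 2); [|lra].
      apply Hlub. intros t Ht. apply Rnot_lt_le. intros Hlt. apply Hn. now exists t. }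
    destruct Ht as [t [Ht Hlt]]. destruct (Ht (e / 2) ltac:(lra) N) as [k [Hk [Pk Hv]]].
    exists k. repeat split; auto; [apply Hmono with (e / 2); auto; lra | lra]. }
  exists w. intros e He N.
  assert (Hn : ~ A (w + e / 2)) by (intros Ha; specialize (Hub _ Ha); lra).
  apply not_all_ex_not in Hn. destruct Hn as [e0 Hn].
  apply imply_to_and in Hn. destruct Hn as [He0 Hn].
  apply not_all_ex_not in Hn. destruct Hn as [N0 Hn].
  pose proof (Rmin_l e e0). pose proof (Rmin_r e e0).
  assert (Hm : 0 < Rmin e e0) by now apply Rmin_glb_lt.
  destruct (HwA (Rmin e e0) Hm (Nat.max N N0)) as [k [Hk [Pk Hv]]].
  assert (v k <= w + e / 2 - e0).
  { apply Rnot_lt_le. intros Hlt. apply Hn. exists k. repeat split; [lia | | exact Hlt].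
    apply Hmono with (Rmin e e0); auto; lra. }
  exists k. repeat split; [lia | apply Hmono with (Rmin e e0); auto; lra |].
  apply Rabs_def1; lra.
Qed.

Lemma bolzano_weierstrass n (u : nat -> nat -> R) B P :
  (forall k i, (i < n)%nat -> - B <= u k i <= B) -> infinitely_often P ->
  exists z, cluster_along n u P z.
Proof.
  induction n as [|m IH]; intros HB HP.
  - exists (fun _ => 0). intros e He N. destruct (HP N) as [k [Hk Pk]].
    exists k. repeat split; auto. intros i Hi; lia.
  - destruct IH as [z Hz]; [intros; apply HB; lia | exact HP |].
    destruct (bounded_cluster_value (fun e k => P k /\ near m (u k) z e) (fun k => u k m) B)
      as [w Hw].
    + intros e e' k He [Pk Hn]. split; [exact Pk | apply near_weaken with e; [lra | exact Hn]].
    + exact Hz.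
    + intros; apply HB; lia.
    + exists (fun i => if Nat.ltb i m then z i else w). intros e He N.
      destruct (Hw e He N) as [k [Hk [[Pk Hn] Hv]]]. exists k. repeat split; auto.
      intros i Hi. destruct (Nat.ltb_spec i m); [now apply Hn|].
      now replace i with m by lia.
Qed.

Lemma cluster_along_cont n u P z f : cluster_along n u P z -> cont_at n f z ->
  forall e, 0 < e -> infinitely_often (fun k => P k /\ near n (u k) z e /\ Rabs (f (u k) - f z) < e).
Proof.
  intros Hc Hf e He N. destruct (Hf e He) as [a [Ha Hfa]].
  pose proof (Rmin_l e a). pose proof (Rmin_r e a).
  destruct (Hc (Rmin e a) ltac:(now apply Rmin_glb_lt) N) as [k [Hk [Pk Hn]]].
  exists k. repeat split; auto; [apply near_weaken with (Rmin e a); auto|].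
  apply Hfa, near_weaken with (Rmin e a); auto.
Qed.

Definition sumsq (n : nat) (x : nat -> R) : R := rsum n (fun i => x i * x i).

Lemma sumsq_ge0 n x : 0 <= sumsq n x.
Proof. apply rsum_nonneg; intros; apply Rle_0_sqr. Qed.

Lemma sq_le_sumsq n x i : (i < n)%nat -> x i * x i <= sumsq n x.
Proof. apply (rsum_ge_term n (fun i => x i * x i)). intros; apply Rle_0_sqr. Qed.

Lemma sumsq_scal n c x : sumsq n (fun i => c * x i) = c * c * sumsq n x.
Proof. unfold sumsq. rewrite <- rsum_scal. apply rsum_ext; intros; ring. Qed.

Lemma quadform_scal n Q c x : quadform n Q (fun i => c * x i) = c * c * quadform n Q x.
Proof.
  unfold quadform, matvec. rewrite <- rsum_scal. apply rsum_ext; intros.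
  replace (rsum n (fun j => Q i j * (c * x j))) with (c * rsum n (fun j => Q i j * x j))
    by (rewrite <- rsum_scal; apply rsum_ext; intros; ring).
  ring.
Qed.

Lemma cont_at_sumsq n z : cont_at n (sumsq n) z.
Proof.
  apply (cont_at_rsum n n (fun i y => y i * y i)); intros j Hj.
  apply (cont_at_mul n (fun y => y j) (fun y => y j)); now apply cont_at_coord.
Qed.

Lemma inv_INR_succ_lt e : 0 < e -> exists N : nat, / (INR N + 1) < e.
Proof.
  intros He. destruct (INR_unbounded (/ e)) as [N HN]. exists N. pose proof (pos_INR N).
  rewrite <- (Rinv_inv e). apply Rinv_lt_contravar; [|lra].
  apply Rmult_lt_0_compat; [now apply Rinv_0_lt_compat | lra].
Qed.

Lemma normalize_quadform_lt n Q lam x : quadform n Q x < lam * sumsq n x ->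
  exists w, sumsq n w = 1 /\ quadform n Q w < lam.
Proof.
  intros Hx. pose proof (sumsq_ge0 n x) as HS0.
  assert (HS : 0 < sumsq n x).
  { destruct (Rle_lt_or_eq_dec _ _ HS0) as [|HS]; [assumption|].
    rewrite quadform_eq0, <- HS in Hx; [lra|]. intros i Hi.
    pose proof (sq_le_sumsq n x i Hi) as Hxi. rewrite <- HS in Hxi. nra. }
  set (s := / sqrt (sumsq n x)).
  assert (Hs : s * s * sumsq n x = 1).
  { unfold s. rewrite <- Rinv_mult, sqrt_sqrt by lra. field. lra. }
  assert (0 < s * s)
    by (unfold s; pose proof (sqrt_lt_R0 _ HS); apply Rmult_lt_0_compat; apply Rinv_0_lt_compat; lra).
  exists (fun i => s * x i). rewrite sumsq_scal, quadform_scal. split; [exact Hs|].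
  apply Rmult_lt_compat_l with (r := s * s) in Hx; [|assumption].
  replace (s * s * (lam * sumsq n x)) with (lam * (s * s * sumsq n x)) in Hx by ring.
  rewrite Hs in Hx. lra.
Qed.

(* otherwise unit vectors with [q(w) < 1/(k+1)] have a cluster point [z] with [|z| = 1], [q(z) <= 0] *)
Lemma pos_def_coercive n Q : pos_def n Q ->
  exists lam, 0 < lam /\ forall x, lam * sumsq n x <= quadform n Q x.
Proof.
  intros HQ. apply NNPP. intros Hn.
  assert (Hk : forall k : nat, exists w, sumsq n w = 1 /\ quadform n Q w < / (INR k + 1)).
  { intros k. apply NNPP. intros Hk. apply Hn. exists (/ (INR k + 1)).
    split; [apply Rinv_0_lt_compat; pose proof (pos_INR k); lra|].
    intros x. apply Rnot_lt_le. intros Hlt. now apply Hk, normalize_quadform_lt with x. }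
  destruct (choice _ Hk) as [W HW].
  assert (HB : forall k i, (i < n)%nat -> - 1 <= W k i <= 1).
  { intros k i Hi. pose proof (sq_le_sumsq n (W k) i Hi) as Hwi. rewrite (proj1 (HW k)) in Hwi. nra. }
  destruct (bolzano_weierstrass n W 1 (fun _ => True) HB) as [z Hz]; [intros N; now exists N|].
  assert (Hs : sumsq n z = 1).
  { apply cond_eq. intros e He.
    destruct (cluster_along_cont n W _ z (sumsq n) Hz (cont_at_sumsq n z) e He 0%nat)
      as [k [_ [_ [_ Hk']]]].
    rewrite (proj1 (HW k)) in Hk'. now rewrite Rabs_minus_sym. }
  assert (Hq : quadform n Q z <= 0).
  { apply Rle_plus_epsilon. intros e He. destruct (inv_INR_succ_lt (e / 2)) as [N HN]; [lra|].
    destruct (cluster_along_cont n W _ z (quadform n Q) Hz (cont_at_quadform n Q z) (e / 2)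
      ltac:(lra) N) as [k [Hkk [_ [_ Hk']]]].
    assert (/ (INR k + 1) <= / (INR N + 1))
      by (apply le_INR in Hkk; pose proof (pos_INR N); apply Rinv_le_contravar; lra).
    pose proof (proj2 (HW k)). apply Rabs_def2 in Hk'. lra. }
  assert (Hz0 : exists i, (i < n)%nat /\ z i <> 0).
  { apply NNPP. intros Hz0. assert (sumsq n z = 0); [|lra].
    apply rsum_eq0. intros i Hi. destruct (Req_dec (z i) 0) as [->|]; [ring|].
    exfalso; apply Hz0; now exists i. }
  specialize (HQ z Hz0). lra.
Qed.

Lemma Fobj_coercive n Q h : pos_def n Q ->
  exists lam c, 0 < lam /\ forall x, lam * sumsq n x - c <= Fobj n Q h x.
Proof.
  intros HQ. destruct (pos_def_coercive n Q HQ) as [lam [Hlam Hq]].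
  exists (lam / 4), (rsum n (fun i => h i * h i) / lam). split; [lra|]. intros x.
  specialize (Hq x). unfold Fobj.
  (* [x_i h_i <= lam/4 x_i^2 + h_i^2/lam] *)
  assert (rsum n (fun i => x i * h i) <= lam / 4 * sumsq n x + rsum n (fun i => h i * h i) / lam).
  { replace (lam / 4 * sumsq n x + rsum n (fun i => h i * h i) / lam)
      with (rsum n (fun i => lam / 4 * (x i * x i) + / lam * (h i * h i)))
      by (unfold sumsq; rewrite rsum_add, !rsum_scal; unfold Rdiv; ring).
    apply rsum_le; intros i Hi.
    assert (Hsq : 0 <= / lam * ((lam / 2 * x i - h i) * (lam / 2 * x i - h i)))
      by (apply Rmult_le_pos; [apply Rlt_le, Rinv_0_lt_compat; lra | apply Rle_0_sqr]).
    replace (/ lam * ((lam / 2 * x i - h i) * (lam / 2 * x i - h i))) with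
      (lam / 4 * (x i * x i) - x i * h i + / lam * (h i * h i)) in Hsq by (field; lra).
    lra. }
  lra.
Qed.

Lemma kkt_minimizer n Q h z : symmetric n Q -> pos_def n Q -> complementary n Q h z ->
  (forall i, (i < n)%nat -> 0 <= grad n Q h z i) ->
  forall y, nonneg n y -> Fobj n Q h z <= Fobj n Q h y.
Proof.
  intros HQs HQ Hc Hg y Hy.
  replace y with (fun i => z i + (y i - z i)) by (apply functional_extensionality; intros; ring).
  rewrite Fobj_add by exact HQs.
  assert (0 <= rsum n (fun i => (y i - z i) * grad n Q h z i)).
  { apply rsum_nonneg. intros i Hi. specialize (Hc i Hi).
    pose proof (Hy i Hi). pose proof (Hg i Hi). nra. }
  pose proof (pos_def_psd n Q HQ (fun i => y i - z i)). lra.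
Qed.

Lemma common_small_radius m (P : nat -> R -> Prop) :
  (forall j r r', 0 < r' <= r -> P j r -> P j r') ->
  (forall j, (j < m)%nat -> exists r, 0 < r /\ P j r) ->
  exists r, 0 < r /\ forall j, (j < m)%nat -> P j r.
Proof.
  intros Hmono. induction m as [|m IH]; intros H; [exists 1; split; [lra | intros; lia]|].
  destruct IH as [r [Hr Hr']]; [intros; apply H; lia|].
  destruct (H m ltac:(lia)) as [s [Hs Hs']].
  pose proof (Rmin_l r s). pose proof (Rmin_r r s).
  exists (Rmin r s). split; [now apply Rmin_glb_lt|]. intros j Hj.
  destruct (Nat.eq_dec j m) as [->|Hjm].
  - apply Hmono with s; [split; [now apply Rmin_glb_lt | lra] | exact Hs'].
  - apply Hmono with r; [split; [now apply Rmin_glb_lt | lra] | apply Hr'; lia].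
Qed.

Lemma signs_persist_near n Q h z : exists rho, 0 < rho /\
  forall y, near n y z rho -> forall j, (j < n)%nat ->
    (0 < z j -> 0 < y j) /\ (grad n Q h z j < 0 -> grad n Q h y j < 0).
Proof.
  destruct (common_small_radius n (fun j rho => forall y, near n y z rho ->
      (0 < z j -> 0 < y j) /\ (grad n Q h z j < 0 -> grad n Q h y j < 0))) as [rho [Hrho Hp]].
  - intros j r r' Hr H y Hy. apply H, near_weaken with r'; [lra | exact Hy].
  - intros j Hj.
    assert (Hg : exists r, 0 < r /\ forall y, near n y z r -> grad n Q h z j < 0 -> grad n Q h y j < 0).
    { destruct (Rlt_dec (grad n Q h z j) 0) as [Hlt|Hge]; [|exists 1; split; [lra | tauto]].
      destruct (cont_at_grad n Q h z j (- grad n Q h z j) ltac:(lra)) as [eta [Heta Hc]].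
      exists eta. split; [exact Heta|]. intros y Hy _. specialize (Hc y Hy).
      apply Rabs_def2 in Hc. lra. }
    destruct Hg as [r2 [Hr2 Hg]].
    set (r1 := if Rlt_dec 0 (z j) then z j else 1).
    assert (Hr1 : 0 < r1 /\ (0 < z j -> r1 <= z j))
      by (unfold r1; destruct (Rlt_dec 0 (z j)); split; intros; lra).
    pose proof (Rmin_l r1 r2). pose proof (Rmin_r r1 r2).
    exists (Rmin r1 r2). split; [apply Rmin_glb_lt; tauto|]. intros y Hy. split.
    + intros Hzj. specialize (Hy j Hj). apply Rabs_def2 in Hy. pose proof (proj2 Hr1 Hzj). lra.
    + apply Hg, near_weaken with (Rmin r1 r2); [lra | exact Hy].
  - exists rho. split; [exact Hrho|]. intros y Hy j Hj. now apply Hp.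
Qed.

(* with these sign conditions every term of [(y - z)^T Q (y - z) = sum_j (y_j - z_j) (g_j(y) - g_j(z))]
   is [<= 0] *)
Lemma complementary_eq n Q h y z : pos_def n Q ->
  nonneg n y -> complementary n Q h y -> nonneg n z -> complementary n Q h z ->
  (forall j, (j < n)%nat -> 0 < z j -> 0 < y j) ->
  (forall j, (j < n)%nat -> grad n Q h z j < 0 -> grad n Q h y j < 0) ->
  forall j, (j < n)%nat -> y j = z j.
Proof.
  intros HQ Hy0 Hyc Hz0 Hzc Hpos Hneg.
  assert (Hq : quadform n Q (fun j => y j - z j) <= 0).
  { unfold quadform. rewrite <- (rsum_eq0 n (fun _ => 0)) by auto. apply rsum_le. intros j Hj.
    rewrite matvec_sub.
    replace (matvec n Q y j - matvec n Q z j) with (grad n Q h y j - grad n Q h z j)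
      by (unfold grad; ring).
    specialize (Hyc j Hj). specialize (Hzc j Hj). specialize (Hy0 j Hj). specialize (Hz0 j Hj).
    destruct (Rlt_dec 0 (z j)) as [Hzp|Hzn].
    - pose proof (Hpos j Hj Hzp).
      apply Rmult_integral in Hyc. apply Rmult_integral in Hzc.
      destruct Hyc as [ | ->]; [lra|]. destruct Hzc as [ | ->]; [lra|]. lra.
    - replace (z j) with 0 in * by lra.
      destruct (Rlt_dec (grad n Q h z j) 0) as [Hgn|Hgp].
      + pose proof (Hneg j Hj Hgn).
        apply Rmult_integral in Hyc. destruct Hyc as [->|]; lra.
      + assert (0 <= y j * grad n Q h z j) by (apply Rmult_le_pos; lra). nra. }
  intros j Hj. apply NNPP. intros Hne.
  assert (0 < quadform n Q (fun j => y j - z j)); [|lra].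
  apply HQ. exists j. split; [exact Hj | lra].
Qed.

Lemma nat_crossing (P : nat -> Prop) a b : (a <= b)%nat -> P a -> ~ P b ->
  exists k, (a <= k < b)%nat /\ P k /\ ~ P (S k).
Proof.
  induction b as [|b IH]; intros Hab Ha Hb.
  - replace a with 0%nat in Ha by lia. contradiction.
  - destruct (Nat.eq_dec a (S b)) as [->|Hne]; [contradiction|].
    destruct (classic (P b)) as [Hpb|Hpb].
    + exists b. split; [lia | tauto].
    + destruct (IH ltac:(lia) Ha Hpb) as [k [Hk Hk']]. exists k. split; [lia | exact Hk'].
Qed.

Section Iteration.
Variables (n : nat) (Q : nat -> nat -> R) (h : nat -> R) (delta : R) (x0 : nat -> R).
Hypothesis HQs : symmetric n Q.
Hypothesis HQ : pos_def n Q.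
Hypothesis Hdelta : 0 < delta.
Hypothesis Hx0 : forall i, (i < n)%nat -> 0 < x0 i.

Let X := iterate n Q h delta x0.
Let F := Fobj n Q h.

Lemma iterate_pos k i : (i < n)%nat -> 0 < X k i.
Proof.
  revert i. induction k as [|k IH]; intros i Hi; [now apply Hx0|].
  now apply step_pos.
Qed.

Lemma iterate_nonneg k : nonneg n (X k).
Proof. intros i Hi. now apply Rlt_le, iterate_pos. Qed.

Lemma Fobj_iterate_descent k : F (X (S k)) + rsum n (gain n Q h delta (X k)) <= F (X k).
Proof. apply step_descent; [exact HQs | exact Hdelta | exact (iterate_pos k)]. Qed.

Lemma Fobj_iterate_succ_le k : F (X (S k)) <= F (X k).
Proof.
  pose proof (Fobj_iterate_descent k).
  assert (0 <= rsum n (gain n Q h delta (X k))); [|lra].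
  apply rsum_nonneg; intros. apply gain_ge0; [exact Hdelta | exact (iterate_pos k) | assumption].
Qed.

Lemma Fobj_iterate_succ_lt k : (exists i, (i < n)%nat /\ X (S k) i <> X k i) -> F (X (S k)) < F (X k).
Proof.
  intros [i [Hi Hne]]. pose proof (Fobj_iterate_descent k).
  assert (0 < rsum n (gain n Q h delta (X k))); [|lra].
  apply rsum_pos; [intros; apply gain_ge0; [exact Hdelta | exact (iterate_pos k) | assumption]|].
  exists i. split; [exact Hi|]. apply gain_pos; [exact Hdelta | exact (iterate_pos k) | exact Hi | exact Hne].
Qed.

Lemma iterate_bounded : exists B, 0 < B /\ forall k i, (i < n)%nat -> X k i <= B.
Proof.
  destruct (Fobj_coercive n Q h HQ) as [lam [c [Hlam Hcoer]]].
  set (S := (F x0 + c) / lam).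
  exists (1 + Rabs S). split; [pose proof (Rabs_pos S); lra|]. intros k i Hi.
  assert (HFk : F (X k) <= F x0).
  { change x0 with (X 0). induction k as [|k IH]; [lra|]. pose proof (Fobj_iterate_succ_le k). lra. }
  assert (sumsq n (X k) <= S).
  { apply Rmult_le_reg_l with lam; [exact Hlam|]. unfold S. specialize (Hcoer (X k)). unfold F in *.
    replace (lam * ((Fobj n Q h x0 + c) / lam)) with (Fobj n Q h x0 + c) by (field; lra). lra. }
  pose proof (sq_le_sumsq n (X k) i Hi). pose proof (Rle_abs S). nra.
Qed.

Lemma Fobj_iterate_cv : exists L, Un_cv (fun k => F (X k)) L.
Proof.
  destruct (Fobj_coercive n Q h HQ) as [lam [c [Hlam Hcoer]]].
  destruct (decreasing_cv (fun k => F (X k))) as [L HL]; [exact Fobj_iterate_succ_le | |now exists L].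
  exists c. intros r [k ->]. unfold opp_seq.
  pose proof (Hcoer (X k)). pose proof (sumsq_ge0 n (X k)). unfold F. nra.
Qed.

Section Limit.
Variables (B L : R).
Hypothesis HB : 0 < B.
Hypothesis HXB : forall k i, (i < n)%nat -> X k i <= B.
Hypothesis HL : Un_cv (fun k => F (X k)) L.

Lemma iterate_in_box k i : (i < n)%nat -> - B <= X k i <= B.
Proof. intros Hi. pose proof (iterate_pos k i Hi). pose proof (HXB k i Hi). lra. Qed.

(* [F(x^k) - F(x^{k+1})] tends to zero and bounds [delta / (2B) |x^{k+1}_i - x^k_i|^2] *)
Lemma iterate_step_vanish eta : 0 < eta ->
  exists K, forall k, (K <= k)%nat -> near n (X (S k)) (X k) eta.
Proof.
  intros Heta. set (c := delta / (2 * B)).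
  assert (Hc : 0 < c) by (unfold c; apply Rdiv_lt_0_compat; lra).
  destruct (HL (c * (eta * eta) / 2)) as [K HK]; [apply Rdiv_lt_0_compat; [apply Rmult_lt_0_compat; nra | lra]|].
  exists K. intros k Hk i Hi.
  pose proof (HK k Hk) as H1. pose proof (HK (S k) ltac:(lia)) as H2. unfold Rdist in H1, H2.
  apply Rabs_def2 in H1. apply Rabs_def2 in H2.
  pose proof (Fobj_iterate_descent k) as Hdesc.
  assert (Hterm : gain n Q h delta (X k) i <= rsum n (gain n Q h delta (X k))).
  { apply rsum_ge_term; [|exact Hi].
    intros. apply gain_ge0; [exact Hdelta | exact (iterate_pos k) | assumption]. }
  pose proof (gain_ge n Q h delta Hdelta (X k) i B (iterate_pos k) Hi (HXB k i Hi)) as Hgain.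
  fold c in Hgain. change (step n Q h delta (X k)) with (X (S k)) in Hgain.
  set (d := X (S k) i - X k i) in *.
  apply Rnot_le_lt. intros Hd.
  assert (eta * eta <= d * d).
  { rewrite <- (Rabs_pos_eq (d * d)) by apply Rle_0_sqr. rewrite Rabs_mult. nra. }
  unfold F in *. nra.
Qed.

(* [x_i g_i(x) = - D_i(x) (x'_i - x_i)] with [D_i] bounded along the iterates *)
Lemma iterate_complementarity_vanish i : (i < n)%nat -> forall e, 0 < e ->
  exists K, forall k, (K <= k)%nat -> Rabs (X k i * grad n Q h (X k) i) < e.
Proof.
  intros Hi e He. set (C := B * rsum n (fun j => Rabs (Q i j)) + Rabs (h i) + delta).
  assert (HD : forall k, denom n Q h delta (X k) i <= C).
  { intros k. unfold denom, C. pose proof (negpart_le_abs (h i)).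
    assert (matvec n (Mabs Q) (X k) i <= B * rsum n (fun j => Rabs (Q i j))); [|lra].
    unfold matvec. rewrite <- rsum_scal. apply rsum_le; intros j Hj. rewrite Mabs_abs.
    pose proof (HXB k j Hj). pose proof (Rabs_pos (Q i j)). rewrite (Rmult_comm B).
    apply Rmult_le_compat_l; lra. }
  assert (HC : delta <= C) by (pose proof (HD 0%nat); pose proof (denom_ge n Q h delta (X 0) i (iterate_nonneg 0)); lra).
  destruct (iterate_step_vanish (e / C)) as [K HK]; [apply Rdiv_lt_0_compat; lra|].
  exists K. intros k Hk. specialize (HK k Hk i Hi).
  pose proof (step_eq n Q h delta Hdelta (X k) i (iterate_nonneg k)) as Hstep.
  change (step n Q h delta (X k)) with (X (S k)) in Hstep.
  pose proof (denom_ge n Q h delta (X k) i (iterate_nonneg k)) as Hden. pose proof (HD k) as HDk.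
  replace (X k i * grad n Q h (X k) i) with (- (denom n Q h delta (X k) i * (X (S k) i - X k i)))
    by (rewrite Hstep; field; lra).
  rewrite Rabs_Ropp, Rabs_mult, (Rabs_pos_eq (denom _ _ _ _ _ _)) by lra.
  apply Rle_lt_trans with (C * Rabs (X (S k) i - X k i)).
  - apply Rmult_le_compat_r; [apply Rabs_pos | exact HDk].
  - apply Rmult_lt_compat_l with (r := C) in HK; [|lra].
    replace (C * (e / C)) with e in HK by (field; lra). exact HK.
Qed.

Lemma cluster_complementary P z : cluster_along n X P z -> nonneg n z /\ complementary n Q h z.
Proof.
  intros Hz. split.
  - intros i Hi. apply Rnot_lt_le. intros Hlt.
    destruct (Hz (- z i) ltac:(lra) 0%nat) as [k [_ [_ Hn]]].
    specialize (Hn i Hi). apply Rabs_def2 in Hn. pose proof (iterate_pos k i Hi). lra.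
  - intros i Hi. apply cond_eq. intros e He. rewrite Rminus_0_r.
    destruct (iterate_complementarity_vanish i Hi (e / 2) ltac:(lra)) as [K HK].
    destruct (cluster_along_cont n X P z (fun y => y i * grad n Q h y i) Hz
      (cont_at_mul n _ _ z (cont_at_coord n i z Hi) (cont_at_grad n Q h z i)) (e / 2) ltac:(lra) K)
      as [k [Hk [_ [_ Hc]]]].
    specialize (HK k Hk).
    pose proof (Rabs_triang (X k i * grad n Q h (X k) i)
                            (- (X k i * grad n Q h (X k) i - z i * grad n Q h z i))) as Htri.
    rewrite Rabs_Ropp in Htri. ring_simplify (X k i * grad n Q h (X k) i
      + - (X k i * grad n Q h (X k) i - z i * grad n Q h z i)) in Htri. lra.
Qed.

Lemma Fobj_cluster P z : cluster_along n X P z -> F z = L.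
Proof.
  intros Hz. apply cond_eq. intros e He.
  destruct (HL (e / 2) ltac:(lra)) as [N HN].
  destruct (cluster_along_cont n X P z F Hz (cont_at_Fobj n Q h z) (e / 2) ltac:(lra) N)
    as [k [Hk [_ [_ Hc]]]].
  specialize (HN k Hk). unfold Rdist in HN. rewrite Rabs_minus_sym in Hc.
  pose proof (Rabs_triang (F z - F (X k)) (F (X k) - L)) as Htri.
  replace (F z - F (X k) + (F (X k) - L)) with (F z - L) in Htri by ring. lra.
Qed.

(* otherwise the iterates cross the annulus [rho/4 .. rho/2] around [z] infinitely often with
   vanishing steps, producing a second complementary cluster point inside the isolation radius *)
Lemma iterate_eventually_near z rho : 0 < rho -> cluster_along n X (fun _ => True) z ->
  (forall y, nonneg n y -> complementary n Q h y -> near n y z rho -> forall j, (j < n)%nat -> y j = z j) ->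
  exists K, forall k, (K <= k)%nat -> near n (X k) z (rho / 2).
Proof.
  intros Hrho Hz Hiso. set (r := rho / 2). apply NNPP. intros Hfar.
  assert (Hfar' : forall K, exists k, (K <= k)%nat /\ ~ near n (X k) z r).
  { intros K. apply NNPP. intros Hn. apply Hfar. exists K. intros k Hk. apply NNPP. intros Hn2.
    apply Hn. now exists k. }
  destruct (iterate_step_vanish (r / 2) ltac:(unfold r; lra)) as [K0 HK0].
  set (P := fun k => ~ near n (X k) z (r / 2) /\ near n (X k) z r).
  assert (HP : infinitely_often P).
  { intros N. destruct (Hz (r / 2) ltac:(unfold r; lra) (Nat.max N K0)) as [k1 [Hk1 [_ Hn1]]].
    destruct (Hfar' k1) as [k2 [Hk2 Hn2]].
    destruct (nat_crossing (fun k => near n (X k) z (r / 2)) k1 k2 Hk2 Hn1) as [k [Hk [Pk Pn]]].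
    { intros Hc. apply Hn2. apply near_weaken with (r / 2); [unfold r; lra | exact Hc]. }
    exists (S k). split; [lia|]. split; [exact Pn|].
    replace r with (r / 2 + r / 2) by field.
    apply near_triangle with (X k); [apply HK0; lia | exact Pk]. }
  destruct (bolzano_weierstrass n X B P iterate_in_box HP) as [z' Hz'].
  destruct (cluster_complementary P z' Hz') as [Hz'0 Hz'c].
  destruct (Hz' (r / 4) ltac:(unfold r; lra) 0%nat) as [k [_ [[Pfar Pnear] Hk]]].
  assert (Hzz : forall j, (j < n)%nat -> z' j = z j).
  { apply Hiso; [exact Hz'0 | exact Hz'c|]. apply near_weaken with (r / 4 + r); [unfold r; lra|].
    apply near_triangle with (X k); [now apply near_sym | exact Pnear]. }
  apply Pfar. intros j Hj. rewrite <- Hzz by exact Hj. specialize (Hk j Hj). unfold r in *. lra.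
Qed.

Lemma cluster_grad_nonneg z : cluster_along n X (fun _ => True) z ->
  forall i, (i < n)%nat -> 0 <= grad n Q h z i.
Proof.
  intros Hz i Hi. destruct (cluster_complementary _ z Hz) as [Hz0 Hzc].
  apply Rnot_lt_le. intros Hneg.
  assert (Hzi : z i = 0) by (specialize (Hzc i Hi); apply Rmult_integral in Hzc; destruct Hzc; [assumption | lra]).
  destruct (signs_persist_near n Q h z) as [rho [Hrho Hsign]].
  destruct (iterate_eventually_near z rho Hrho Hz) as [K HK].
  { intros y Hy0 Hyc Hy. apply complementary_eq with Q h; try assumption;
      intros j Hj; now apply (Hsign y Hy j Hj). }
  (* near [z] the gradient entry stays negative, so the [i]-th coordinate increases *)
  assert (Hinc : forall k, (K <= k)%nat -> X K i <= X k i).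
  { intros k Hk. induction Hk as [|k Hk IH]; [lra|].
    change (X (S k)) with (step n Q h delta (X k)). rewrite step_eq by (exact Hdelta || apply iterate_nonneg).
    assert (grad n Q h (X k) i < 0).
    { apply (Hsign (X k)); [apply near_weaken with (rho / 2); [lra | now apply HK] | exact Hi | exact Hneg]. }
    pose proof (iterate_pos k i Hi). pose proof (denom_ge n Q h delta (X k) i (iterate_nonneg k)).
    assert (X k i * grad n Q h (X k) i / denom n Q h delta (X k) i < 0); [|lra].
    apply Rmult_neg_pos; [nra | apply Rinv_0_lt_compat; lra]. }
  pose proof (iterate_pos K i Hi).
  destruct (Hz (X K i) ltac:(assumption) K) as [k [Hk [_ Hn]]].
  specialize (Hn i Hi). rewrite Hzi, Rminus_0_r in Hn. specialize (Hinc k Hk).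
  apply Rabs_def2 in Hn. lra.
Qed.

End Limit.
End Iteration.

Theorem theorem1 (n : nat) (Q : nat -> nat -> R) (h : nat -> R) (delta : R)
  (x0 : nat -> R)
  (HQs : symmetric n Q) (HQpd : pos_def n Q) (Hdelta : 0 < delta)
  (Hx0 : forall i, (i < n)%nat -> 0 < x0 i) :
  (forall k i, (i < n)%nat -> 0 < iterate n Q h delta x0 k i) /\
  (forall k, Fobj n Q h (iterate n Q h delta x0 (S k))
             <= Fobj n Q h (iterate n Q h delta x0 k)) /\
  (forall k, (exists i, (i < n)%nat /\
                iterate n Q h delta x0 (S k) i <> iterate n Q h delta x0 k i) ->
             Fobj n Q h (iterate n Q h delta x0 (S k))
             < Fobj n Q h (iterate n Q h delta x0 k)) /\
  (exists xs : nat -> R,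
     (forall i, (i < n)%nat -> 0 <= xs i) /\
     (forall y : nat -> R, (forall i, (i < n)%nat -> 0 <= y i) ->
        Fobj n Q h xs <= Fobj n Q h y) /\
     (forall i, (i < n)%nat -> step n Q h delta xs i = xs i) /\
     Un_cv (fun k => Fobj n Q h (iterate n Q h delta x0 k)) (Fobj n Q h xs)).
Proof.
  destruct (iterate_bounded n Q h delta x0 HQs HQpd Hdelta Hx0) as [B [HB HXB]].
  destruct (Fobj_iterate_cv n Q h delta x0 HQs HQpd Hdelta Hx0) as [L HL].
  destruct (bolzano_weierstrass n (iterate n Q h delta x0) B (fun _ => True)
    (iterate_in_box n Q h delta x0 Hdelta Hx0 B HB HXB)) as [z Hz]; [intros N; now exists N|].
  destruct (cluster_complementary n Q h delta x0 HQs Hdelta Hx0 B L HB HXB HL _ z Hz) as [Hz0 Hzc].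
  split; [exact (iterate_pos n Q h delta x0 Hdelta Hx0)|].
  split; [exact (Fobj_iterate_succ_le n Q h delta x0 HQs Hdelta Hx0)|].
  split; [exact (Fobj_iterate_succ_lt n Q h delta x0 HQs Hdelta Hx0)|].
  exists z. split; [exact Hz0|]. split.
  - apply kkt_minimizer; [exact HQs | exact HQpd | exact Hzc|].
    exact (cluster_grad_nonneg n Q h delta x0 HQs HQpd Hdelta Hx0 B L HB HXB HL z Hz).
  - split; [intros i Hi; now apply step_fixed|].
    now rewrite (Fobj_cluster n Q h delta x0 L HL _ z Hz).
Qed.
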